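(* Let $L$ be a friendly labeling function, $T$ a tree with root edge, and $e$ an interior edge of $T$. Let $$g=\prod_{i=1}^d q_{(l_i,m_i)}-\prod_{i=1}^d q_{(l'_i,m_i)}\in I_{T_{e,-},L},$$ where $(l_i,m_i),(l'_i,m_i)\in{\rm im}(L^{T_{e,-}})$ and $m_i$ denotes the label on $e$. Let $n_1,\dots,n_d$ be labelings of the edges of $T_{e,+}$ other than $e$ such that $(m_i,n_i)\in{\rm im}(L^{T_{e,+}})$ for each $i$. Then $(l_i,m_i,n_i),(l'_i,m_i,n_i)\in{\rm im}(L^T)$ for all $i$, and $$g^*=\prod_{i=1}^d q_{(l_i,m_i,n_i)}-\prod_{i=1}^d q_{(l'_i,m_i,n_i)}$$ lies in $I_{T,L}$. The analogous statement holds with the roles of $T_{e,-}$ and $T_{e,+}$ exchanged.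
   Context: Let $G$ be a finite abelian group written additively, $\mathcal{L}$ a finite set, $L:G\to\mathcal{L}$ a function. A tree with root edge is a finite tree $T$ with a distinguished leaf $\rho$; the edge at $\rho$ is the root edge. Every vertex $v\neq\rho$ has a unique parent edge (first edge on the path from $v$ to $\rho$); other edges at $v$ are child edges. Vertices that are neither $\rho$ nor leaves are interior vertices; an edge is interior if both endpoints are interior vertices. $E(T)$ is the edge set. An edge $e'$ is below $e$ if $e$ lies on the path from $\rho$ to $e'$ (so $e$ is below itself). A map $h:E(T)\to G$ is a consistent assignment if for every interior vertex $v$, $h(\text{parent edge of }v)=\sum h(\text{child edges of }v)$. ${\rm im}(L^T)=\{L\circ h: h\text{ consistent}\}$ is the set of consistent labelings. $I_{T,L}$ is the kernel of $\mathbb{C}[q_\lambda:\lambda\in{\rm im}(L^T)]\to\mathbb{C}[a^{(e)}_l:e\in E(T),l\in\mathcal{L}]$, $q_\lambda\mapsto\prod_{e\in E(T)}a^{(e)}_{\lambda(e)}$; the same definitions apply to any tree with root edge. For an edge $e$, $T_{e,-}$ is the tree formed by all edges below $e$, regarded as a tree with root edge $e$ (distinguished leaf = endpoint of $e$ closer to $\rho$); $T_{e,+}$ is the tree formed by $e$ and all edges not below $e$, with the same $\rho$ (the endpoint of $e$ farther from $\rho$ becomes a leaf). Labelings of $T_{e,-}$ are written $(l,m)$ and of $T_{e,+}$ as $(m,n)$, and of $T$ as $(l,m,n)$, where $l$ is the restriction to edges of $T_{e,-}$ other than $e$, $m$ the value on $e$, $n$ the restriction to edges of $T_{e,+}$ other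 than $e$. Friendliness: for $m\ge3$ let $Z_m=\{(g_1,\dots,g_m)\in G^m: g_1+\cdots+g_{m-1}=g_m\}$ and $\widetilde{L}(g_1,\dots,g_m)=(L(g_1),\dots,L(g_m))$; $L$ is $m$-friendly if for every $l\in\widetilde{L}(Z_m)$ and every $i$, the set of $i$-th coordinates of elements of $\widetilde{L}^{-1}(l)$ equals $L^{-1}(l_i)$; $L$ is friendly if it is $m$-friendly for all $m\ge3$. *)

From HB Require Import structures.
From mathcomp Require Import all_boot all_order all_algebra.
From mathcomp Require Import mpoly.
From mathcomp Require Import Rstruct complex.

Set Implicit Arguments.
Unset Strict Implicit.
Unset Printing Implicit Defensive.

Import GRing.Theory.
Local Open Scope ring_scope.

Definition CC : Type := complex Rdefinitions.R.

(* A tree with root edge is represented by the vertex [v] at the far   *)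
(* end of the root edge (the near end is the distinguished leaf rho):  *)
(* [Node ts] is a vertex whose children (the subtrees hanging off its  *)
(* child edges) are [ts].  Every non-rho vertex v corresponds to its   *)
(* parent edge, and edges are addressed by the path (sequence of child *)
(* indices) from the root edge: [::] is the root edge, [i] is the i-th *)
(* child edge of the top vertex, etc.  A vertex [Node [::]] is a leaf. *)
Inductive tree := Node of seq tree.

Definition leaf := Node [::].

Definition children (t : tree) : seq tree := let: Node ts := t in ts.

Fixpoint edges (t : tree) : seq (seq nat) :=
  let: Node ts := t in
  let es := map edges ts in
  [::] :: flatten [seq map (cons i) (nth [::] es i) | i <- iota 0 (size ts)].

(* the subtree below the edge with path p (T_{e,-} when p is the path of e) *)
Fixpoint subtree (t : tree) (p : seq nat) : tree :=
  match p with
  | [::] => t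
  | i :: p' => subtree (nth leaf (children t) i) p'
  end.

(* t with everything strictly below the edge at path p removed, so that the
   far endpoint of that edge becomes a leaf (T_{e,+}) *)
Fixpoint cut (t : tree) (p : seq nat) : tree :=
  match p with
  | [::] => leaf
  | i :: p' =>
      Node [seq (if j == i then cut (nth leaf (children t) j) p'
                 else nth leaf (children t) j) | j <- iota 0 (size (children t))]
  end.

Definition edge (t : tree) := 'I_(size (edges t)).
Definition epath (t : tree) (e : edge t) : seq nat := nth [::] (edges t) e.

Definition far_is_leaf (t : tree) (e : edge t) : bool :=
  size (children (subtree t (epath e))) == 0%N.

Definition is_child (t : tree) (e e' : edge t) : bool :=
  prefix (epath e) (epath e') && (size (epath e') == (size (epath e)).+1).

(* e' is below e (e is on the path from rho to e'; e is below itself) *)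
Definition below (t : tree) (e e' : edge t) : bool := prefix (epath e) (epath e').

(* interior edge: both endpoints are interior vertices (the near endpoint is
   rho for the root edge, otherwise it is interior since it has e as a child) *)
Definition interior_edge (t : tree) (e : edge t) : bool :=
  (epath e != [::]) && ~~ far_is_leaf e.

Section Labelings.
Variables (G : finZmodType) (Lab : finType) (L : G -> Lab).

Definition consistent (t : tree) (h : {ffun edge t -> G}) : bool :=
  [forall e : edge t, ~~ far_is_leaf e ==>
     (h e == \sum_(e' : edge t | is_child e e') h e')].

Definition labeling (t : tree) := {ffun edge t -> Lab}.

Definition imL (t : tree) : {set labeling t} :=
  [set lam | [exists h : {ffun edge t -> G},
                consistent h && (lam == [ffun e => L (h e)])]].

(* label of the edge with path p (default L 0 for paths that are not edges) *)
Definition lab_at (t : tree) (lam : labeling t) (p : seq nat) : Lab :=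
  if @insub _ (fun k => k < size (edges t))%N 'I_(size (edges t))
       (index p (edges t)) is Some i then lam i else L 0.

Definition Tminus (t : tree) (e : edge t) : tree := subtree t (epath e).
Definition Tplus (t : tree) (e : edge t) : tree := cut t (epath e).

(* (l,m,n): gluing a labeling of T_{e,-} and a labeling of T_{e,+}; the
   label of e is taken from the T_{e,-} labeling (in the statement the two
   labelings agree on e) *)
Definition join (t : tree) (e : edge t)
    (lm : labeling (Tminus e)) (lp : labeling (Tplus e)) : labeling t :=
  [ffun e' => if below e e' then lab_at lm (drop (size (epath e)) (epath e'))
              else lab_at lp (epath e')].

Definition qidx (t : tree) := {lam : labeling t | lam \in imL t}.
Definition nq (t : tree) : nat := #|{: qidx t}|.
Definition na (t : tree) : nat := #|{: edge t * Lab}|.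

(* q_lambda (the variable when lambda is in im(L^T); 0 otherwise -- only
   used for lambda in im(L^T)) *)
Definition qvar (t : tree) (lam : labeling t) : {mpoly CC[nq t]} :=
  if @insub _ (fun x => x \in imL t) (qidx t) lam is Some x
  then 'X_(enum_rank x) else 0.

Definition avar (t : tree) (e : edge t) (l : Lab) : {mpoly CC[na t]} :=
  'X_(enum_rank (e, l)).

Definition qimage (t : tree) : (nq t).-tuple {mpoly CC[na t]} :=
  [tuple \prod_(e : edge t) avar e (val (enum_val i) e) | i < nq t].

Definition ideal (t : tree) : pred {mpoly CC[nq t]} :=
  fun p => comp_mpoly (qimage t) p == 0.

Definition inZ (m : nat) (g : {ffun 'I_m.+1 -> G}) : bool :=
  \sum_(j < m.+1 | j != ord_max) g j == g ord_max.

Definition m_friendly (m : nat) : Prop :=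
  forall l : {ffun 'I_m.+1 -> Lab},
    (exists g, inZ g /\ forall j, L (g j) = l j) ->
    forall (i : 'I_m.+1) (x : G),
      (exists g, [/\ inZ g, (forall j, L (g j) = l j) & g i = x]) <-> L x = l i.

(* friendly: (m+1)-friendly for all m+1 >= 3 *)
Definition friendly : Prop := forall m : nat, (2 <= m)%N -> m_friendly m.

End Labelings.
Arguments ideal [G Lab] L t _.

From HB Require Import structures.
From mathcomp Require Import all_boot all_order all_algebra.
From mathcomp Require Import mpoly.
From mathcomp Require Import Rstruct complex.
Local Open Scope ring_scope.
Set Implicit Arguments.
Unset Strict Implicit.
Import GRing.Theory.

(* A consistent assignment on T restricts to consistent assignments on T_{e,-}
   and T_{e,+}.  Conversely, two of them whose labels agree on e glue to one on
   T: friendliness lets one re-choose the assignment on T_{e,-}, vertex by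
   vertex from its root, keeping all labels but taking any prescribed value of
   the right label on e.  On the polynomial side, the image of q_(l,m,n) is the
   image of q_(l,m), with its edge variables renamed into T, times a monomial
   depending on n only; multiplying the relation
   prod_i img q_(l_i,m_i) = prod_i img q_(l'_i,m_i) factorwise by these common
   monomials puts g* in I_{T,L}.  The case of T_{e,+} is symmetric. *)

Lemma cat_injr (T : Type) (s : seq T) : injective (cat s).
Proof. by elim: s => //= x s IHs s1 s2 [/IHs]. Qed.

Lemma prefix_rcons_eq (T : eqType) (p q : seq T) x :
  prefix p (rcons q x) = prefix p q || (p == rcons q x).
Proof. by elim: q p => [|y q IHq] [|z p] //=; rewrite IHq eqseq_cons andb_orr. Qed.

Lemma sum_iota_pred1 n i (F : nat -> nat) :
  (\sum_(j <- iota 0 n) (if j == i then F j else 0) = if i < n then F i else 0)%N.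
Proof.
rewrite -big_mkcond -{1}(subn0 n) -/(index_iota 0 n) big_mkord.
case: ltnP => [lt_in|ge_in]; first by rewrite (big_pred1 (Ordinal lt_in)).
by rewrite big1 // => j /eqP ji; rewrite -ji leqNgt ltn_ord in ge_in.
Qed.

Lemma sum_ord_neq_max (V : nmodType) n (F : 'I_n.+1 -> V) :
  \sum_(j < n.+1 | j != ord_max) F j = \sum_(i < n) F (widen_ord (leqnSn n) i).
Proof.
rewrite big_mkcond big_ord_recr /= eqxx addr0; apply: eq_bigr => i _.
by rewrite ifT // -(inj_eq val_inj) /= neq_ltn ltn_ord.
Qed.

Lemma rmorph_prod_mul_eq (R S : comNzRingType) (phi : {rmorphism R -> S}) d
    (A B : 'I_d -> R) (C : 'I_d -> S) :
  \prod_(i < d) A i = \prod_(i < d) B i ->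
  \prod_(i < d) (phi (A i) * C i) = \prod_(i < d) (phi (B i) * C i).
Proof. by move=> AB; rewrite !big_split /= -!rmorph_prod AB. Qed.

(* The generated [tree_ind] gives no induction hypothesis for the subtrees. *)
Definition tree_nth_ind (P : tree -> Prop)
    (IH : forall ts, (forall i, (i < size ts)%N -> P (nth leaf ts i)) -> P (Node ts)) :
  forall t, P t :=
  fix F t := let: Node ts := t in
    IH ts ((fix Fs (ts : seq tree) : forall i, (i < size ts)%N -> P (nth leaf ts i) :=
      match ts with
      | [::] => fun i lt_i0 => False_ind _ (notF lt_i0)
      | t :: ts' => fun i => if i is i'.+1 then Fs ts' i' else fun=> F t
      end) ts).

Fixpoint is_path (t : tree) (q : seq nat) : bool :=
  if q is i :: q' then (i < size (children t))%N && is_path (nth leaf (children t) i) q'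
  else true.

Definition arity (t : tree) (q : seq nat) : nat := size (children (subtree t q)).

Lemma count_mem_edges t q : count_mem q (edges t) = is_path t q.
Proof.
elim: q t => [|i q IHq] [ts] /=; rewrite count_flatten -map_comp sumnE big_map.
  rewrite big1 // => j _; rewrite /= count_map.
  by rewrite (eq_count (a2 := pred0)) ?count_pred0.
rewrite add0n (eq_bigr (fun j => if j == i then
    count_mem q (nth [::] [seq edges t | t <- ts] j) else 0%N)); last first.
  move=> j _ /=; rewrite count_map; case: eqP => [->|ne].
    by apply: eq_count => s /=; rewrite eqseq_cons eqxx.
  rewrite (eq_count (a2 := pred0)) ?count_pred0 // => s /=.
  by rewrite eqseq_cons; case: eqP.
by rewrite sum_iota_pred1; case: ifP => // lt_i; rewrite (nth_map leaf) // IHq.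
Qed.

Lemma mem_edges t q : (q \in edges t) = is_path t q.
Proof. by rewrite -has_pred1 has_count count_mem_edges lt0b. Qed.

Lemma uniq_edges t : uniq (edges t).
Proof. by apply: count_mem_uniq => q; rewrite count_mem_edges mem_edges. Qed.

Lemma subtree_cat t p q : subtree t (p ++ q) = subtree (subtree t p) q.
Proof. by elim: p t => [|i p IHp] t //=. Qed.

Lemma is_path_cat t p q : is_path t (p ++ q) = is_path t p && is_path (subtree t p) q.
Proof. by elim: p t => [|i p IHp] t //=; rewrite IHp andbA. Qed.

Lemma is_path_rcons t q i : is_path t (rcons q i) = is_path t q && (i < arity t q)%N.
Proof. by rewrite -cats1 is_path_cat /= andbT. Qed.

Lemma is_path_cut t p q : is_path t p ->
  is_path (cut t p) q = is_path t q && ~~ (prefix p q && (q != p)).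
Proof.
elim: p t q => [|i p IHp] t [|j q] //=; first by rewrite andbF.
case/andP=> lt_i path_p; rewrite size_map size_iota.
case: ltnP => //= lt_j; rewrite (nth_map 0%N) ?size_iota // nth_iota // add0n.
by case: eqVneq => [->|] /=; rewrite ?IHp ?eqseq_cons ?eqxx ?andbT.
Qed.

Lemma arity_cut t p q : is_path t p -> is_path (cut t p) q ->
  arity (cut t p) q = if q == p then 0%N else arity t q.
Proof.
elim: p t q => [|i p IHp] t [|j q] //=.
- by rewrite /arity /= size_map size_iota.
- case/andP=> lt_i path_p; rewrite size_map size_iota => /andP[lt_j].
  rewrite /arity /= (nth_map 0%N) ?size_iota // nth_iota // add0n eqseq_cons.
  by case: eqVneq => [->|] //= path_q; rewrite -IHp.
Qed.

Lemma is_path_epath t (e : edge t) : is_path t (epath e).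
Proof. by rewrite -mem_edges mem_nth. Qed.

Lemma index_epath t (e : edge t) : index (epath e) (edges t) = e.
Proof. by rewrite index_uniq ?uniq_edges. Qed.

Lemma edge_of_path t q : is_path t q -> {e : edge t | epath e = q}.
Proof.
rewrite -mem_edges => q_edge; have lt_q : (index q (edges t) < size (edges t))%N.
  by rewrite index_mem.
by exists (Ordinal lt_q); rewrite /epath nth_index.
Qed.

Definition edge_at t (d : edge t) q : edge t := odflt d (insub (index q (edges t))).

Lemma edge_at_epath t (d e : edge t) : edge_at d (epath e) = e.
Proof. by rewrite /edge_at index_epath valK. Qed.

Lemma size_edges_gt0 t : (0 < size (edges t))%N. Proof. by case: t. Qed.

Definition root_edge t : edge t := Ordinal (size_edges_gt0 t).

Lemma big_edges (R : Type) (idx : R) (op : R -> R -> R) t (P : pred (seq nat))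
    (F : seq nat -> R) :
  \big[op/idx]_(e : edge t | P (epath e)) F (epath e) = \big[op/idx]_(q <- edges t | P q) F q.
Proof. by rewrite (big_nth [::]) big_mkord. Qed.

Lemma sum_child_edges (V : nmodType) t (e : edge t) (F : seq nat -> V) :
  \sum_(e' : edge t | is_child e e') F (epath e') =
  \sum_(i < arity t (epath e)) F (rcons (epath e) i).
Proof.
rewrite (@big_edges _ 0 +%R t (fun q => prefix (epath e) q && (size q == (size (epath e)).+1)) F).
rewrite -big_filter -(big_mkord xpredT (fun i => F (rcons (epath e) i)))
  -(big_map (rcons (epath e)) xpredT).
apply: perm_big; apply: uniq_perm; first exact/filter_uniq/uniq_edges.
  by rewrite (map_inj_uniq (@rcons_injr _ _)) iota_uniq.
move=> q; rewrite mem_filter mem_edges; apply/idP/mapP.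
  case/andP=> /andP[/prefixP[s ->]]; rewrite size_cat -addn1 eqn_add2l.
  case: s => [|i [|]] //= _; rewrite cats1 is_path_rcons => /andP[_ lt_i].
  by exists i; rewrite ?mem_index_iota.
case=> i; rewrite mem_index_iota => lt_i ->.
by rewrite prefix_rcons size_rcons eqxx is_path_rcons is_path_epath.
Qed.

Section Consistency.
Variables (G : finZmodType) (Lab : finType) (L : G -> Lab).

(* [h] is indexed by paths; its values off [edges t] are irrelevant. *)
Definition path_consistent t (h : seq nat -> G) :=
  forall q, is_path t q -> (0 < arity t q)%N -> h q = \sum_(i < arity t q) h (rcons q i).

Lemma lab_at_epath t (lam : labeling Lab t) (e : edge t) : lab_at L lam (epath e) = lam e.
Proof. by rewrite /lab_at index_epath valK. Qed.

Lemma imL_pathP t (lam : labeling Lab t) :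
  reflect (exists2 h, path_consistent t h & forall e, lam e = L (h (epath e)))
          (lam \in imL L t).
Proof.
apply: (iffP idP).
  rewrite inE => /existsP[h /andP[/forallP h_cons /eqP ->]].
  exists (h \o edge_at (root_edge t)) => [q /edge_of_path[e <-] arity_gt0|e]; last first.
    by rewrite ffunE /= edge_at_epath.
  have := h_cons e; rewrite /far_is_leaf -lt0n arity_gt0 /= edge_at_epath => /eqP ->.
  rewrite -(sum_child_edges e (h \o edge_at (root_edge t))).
  by apply: eq_bigr => e' _ /=; rewrite edge_at_epath.
case=> h h_cons lamE; rewrite inE; apply/existsP; exists [ffun e => h (epath e)].
rewrite (_ : [ffun _ => _] = lam); last by apply/ffunP => e; rewrite !ffunE lamE.
rewrite eqxx andbT; apply/forallP => e; apply/implyP; rewrite /far_is_leaf -lt0n => arity_gt0.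
rewrite ffunE (h_cons _ (is_path_epath e) arity_gt0) -sum_child_edges.
by apply/eqP/eq_bigr => e' _; rewrite ffunE.
Qed.

Lemma path_consistent_child ts h i : path_consistent (Node ts) h -> (i < size ts)%N ->
  path_consistent (nth leaf ts i) (h \o cons i).
Proof.
by move=> h_cons lt_i q path_q arity_gt0; rewrite /= (h_cons (i :: q)) //= lt_i.
Qed.

Hypothesis L_friendly : friendly L.

(* Friendliness at the last coordinate of Z_{n+2}. *)
Lemma friendly_resum n (c : 'I_n.+1 -> G) a : L a = L (\sum_i c i) ->
  exists2 c' : 'I_n.+1 -> G, forall i, L (c' i) = L (c i) & \sum_i c' i = a.
Proof.
case: n c => [|n] c La.
  by exists (fun=> a) => [i|]; rewrite ?ord1 ?La big_ord1.
pose g := [ffun j : 'I_n.+3 => if (j < n.+2)%N then c (inord j) else \sum_i c i].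
have gK i : g (widen_ord (leqnSn _) i) = c i by rewrite ffunE /= ltn_ord inord_val.
have g_Z : inZ g.
  by rewrite /inZ sum_ord_neq_max ffunE /= ltnn; apply/eqP/eq_bigr => i _; rewrite gK.
have [_ /(_ _)/Wrap[]] := @L_friendly n.+2 isT
  [ffun j => L (g j)] (ex_intro _ g (conj g_Z (fun j => esym (ffunE _ _)))) ord_max a.
  by rewrite !ffunE /= ltnn.
case=> g' [g'_Z g'L g'a]; exists (fun i => g' (widen_ord (leqnSn _) i)) => [i|].
  by rewrite g'L ffunE gK.
by move: g'_Z; rewrite /inZ sum_ord_neq_max g'a => /eqP.
Qed.

(* Induction from the root: re-choose the values on the child edges with
   [friendly_resum], then recurse into the subtrees. *)
Lemma consistent_reroot t h a : path_consistent t h -> L a = L (h [::]) ->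
  exists h', [/\ path_consistent t h', forall q, L (h' q) = L (h q) & h' [::] = a].
Proof.
elim/tree_nth_ind: t h a => ts IHts h a h_cons La.
case size_ts: (size ts) => [|n].
  exists (fun q => if q == [::] then a else h q); split => //; last by case.
  by case=> [|i q]; rewrite /arity /= size_ts.
have h_root : h [::] = \sum_(i < n.+1) h [:: val i].
  by have := h_cons [::] isT; rewrite /arity /= size_ts => ->.
have [c' c'L c'a] := @friendly_resum n (fun i => h [:: val i]) a (etrans La (congr1 L h_root)).
have /fin_all_exists[H HP] : forall i : 'I_n.+1, exists h', [/\ path_consistent (nth leaf ts i) h',
    forall q, L (h' q) = L (h (val i :: q)) & h' [::] = c' i].
  move=> i; apply: IHts; rewrite ?c'L //; first by rewrite size_ts ltn_ord.
  by apply: path_consistent_child; rewrite // size_ts ltn_ord.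
exists (fun q => if q is i :: q' then if (i < n.+1)%N then H (inord i) q' else h q else a).
split=> // [[|i q]|[|i q]] //=.
- rewrite /arity /= size_ts => _ _; rewrite -c'a; apply: eq_bigr => i _.
  by rewrite ltn_ord inord_val; case: (HP i).
- rewrite size_ts => /andP[lt_i path_q] arity_gt0; rewrite lt_i.
  have := HP (inord i); rewrite inordK // => -[H_cons _ _].
  by rewrite (H_cons q path_q arity_gt0); apply: eq_bigr.
- by case: ifP => // lt_i; have [_ -> _] := HP (inord i); rewrite /= inordK.
Qed.

Lemma consistent_glue t p hm hp : is_path t p ->
    path_consistent (subtree t p) hm -> path_consistent (cut t p) hp ->
    L (hm [::]) = L (hp p) ->
  exists2 h, path_consistent t h &
    forall q, L (h q) = if prefix p q then L (hm (drop (size p) q)) else L (hp q).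
Proof.
move=> path_p hm_cons hp_cons Lp.
have [hm' [hm'_cons hm'L hm'p]] := consistent_reroot hm_cons (esym Lp).
exists (fun q => if prefix p q then hm' (drop (size p) q) else hp q); last first.
  by move=> q; case: ifP.
move=> q; have [/prefixP[r ->]|not_pq] := boolP (prefix p q) => path_q arity_gt0.
  have path_r : is_path (subtree t p) r by move: path_q; rewrite is_path_cat path_p.
  rewrite drop_size_cat // /arity subtree_cat -/(arity _ r) in arity_gt0 *.
  rewrite (hm'_cons r path_r arity_gt0); apply: eq_bigr => i _.
  by rewrite rcons_cat prefix_prefix drop_size_cat.
have q_neq_p : q != p by apply: contraNneq not_pq => ->; rewrite prefix_refl.
have path_q' : is_path (cut t p) q by rewrite is_path_cut // path_q (negPf not_pq).
have arity_q : arity (cut t p) q = arity t q by rewrite arity_cut // (negPf q_neq_p).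
rewrite -arity_q in arity_gt0 *.
rewrite (hp_cons q path_q' arity_gt0); apply: eq_bigr => i _.
rewrite prefix_rcons_eq (negPf not_pq) /=; case: eqP => // <-.
by rewrite drop_size hm'p.
Qed.

Lemma join_imL T (e : edge T) lm lp :
    lm \in imL L (Tminus e) -> lp \in imL L (Tplus e) ->
    lab_at L lm [::] = lab_at L lp (epath e) ->
  join L lm lp \in imL L T.
Proof.
move=> /imL_pathP[hm hm_cons hmL] /imL_pathP[hp hp_cons hpL] lab_e.
have path_e := is_path_epath e.
have lmE r : is_path (subtree T (epath e)) r -> lab_at L lm r = L (hm r).
  by case/edge_of_path=> f <-; rewrite lab_at_epath hmL.
have lpE r : is_path (cut T (epath e)) r -> lab_at L lp r = L (hp r).
  by case/edge_of_path=> f <-; rewrite lab_at_epath hpL.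
have [|h h_cons hL] := consistent_glue path_e hm_cons hp_cons.
  by rewrite -lmE // -lpE ?lab_e // is_path_cut // path_e prefix_refl eqxx.
apply/imL_pathP; exists h => // e'; rewrite ffunE /below hL; case: ifP => [|not_below].
  case/prefixP=> r e'E; rewrite e'E drop_size_cat // lmE //.
  by have := is_path_epath e'; rewrite e'E is_path_cat path_e.
by rewrite lpE // is_path_cut // is_path_epath not_below.
Qed.

End Consistency.

Section Monomials.
Variables (G : finZmodType) (Lab : finType) (L : G -> Lab).

Definition edge_monomial t (lam : labeling Lab t) : {mpoly CC[na Lab t]} :=
  \prod_(e : edge t) avar e (lam e).

Definition rename_edges t t' (f : edge t -> edge t') :
    {mpoly CC[na Lab t]} -> {mpoly CC[na Lab t']} :=
  comp_mpoly [tuple avar (f (enum_val j).1) (enum_val j).2 | j < na Lab t].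

Lemma rename_edges_monomial t t' (f : edge t -> edge t') (lam : labeling Lab t) :
  rename_edges f (edge_monomial lam) = \prod_(e : edge t) avar (f e) (lam e).
Proof.
rewrite /rename_edges rmorph_prod; apply: eq_bigr => e _.
by rewrite /= /avar comp_mpolyXU -tnth_nth tnth_mktuple enum_rankK.
Qed.

Lemma qimage_prod_qvar t d (lam : 'I_d -> labeling Lab t) :
    (forall i, lam i \in imL L t) ->
  comp_mpoly (qimage L t) (\prod_(i < d) qvar L (lam i)) = \prod_(i < d) edge_monomial (lam i).
Proof.
move=> lam_imL; rewrite rmorph_prod; apply: eq_bigr => i _.
rewrite /= /qvar; case: insubP => [x _ xE|]; last by rewrite lam_imL.
by rewrite comp_mpolyXU -tnth_nth tnth_mktuple enum_rankK xE.
Qed.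

Lemma ideal_binomial_lift s t (f : edge s -> edge t) d (x x' : 'I_d -> labeling Lab s)
    (y y' : 'I_d -> labeling Lab t) (C : 'I_d -> {mpoly CC[na Lab t]}) :
    (forall i, x i \in imL L s) -> (forall i, x' i \in imL L s) ->
    (forall i, y i \in imL L t) -> (forall i, y' i \in imL L t) ->
    (forall i, edge_monomial (y i) = rename_edges f (edge_monomial (x i)) * C i) ->
    (forall i, edge_monomial (y' i) = rename_edges f (edge_monomial (x' i)) * C i) ->
    \prod_(i < d) qvar L (x i) - \prod_(i < d) qvar L (x' i) \in ideal L s ->
  \prod_(i < d) qvar L (y i) - \prod_(i < d) qvar L (y' i) \in ideal L t.
Proof.
move=> x_imL x'_imL y_imL y'_imL yE y'E; rewrite !unfold_in /ideal !comp_mpolyB.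
rewrite !qimage_prod_qvar // !subr_eq0 => /eqP xE.
under eq_bigr do rewrite yE; under [X in _ == X]eq_bigr do rewrite y'E.
by apply/eqP/rmorph_prod_mul_eq.
Qed.

Variables (T : tree) (e : edge T).

Definition minus_edge (f : edge (Tminus e)) : edge T := edge_at e (epath e ++ epath f).
Definition plus_edge (f : edge (Tplus e)) : edge T := edge_at e (epath f).

Definition monomial_above (lp : labeling Lab (Tplus e)) : {mpoly CC[na Lab T]} :=
  \prod_(e' : edge T | ~~ below e e') avar e' (lab_at L lp (epath e')).

Definition monomial_strictly_below (lm : labeling Lab (Tminus e)) : {mpoly CC[na Lab T]} :=
  \prod_(e' : edge T | below e e' && (epath e' != epath e))
    avar e' (lab_at L lm (drop (size (epath e)) (epath e'))).

Lemma monomial_join_minus lm lp :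
  edge_monomial (join L lm lp) = rename_edges minus_edge (edge_monomial lm) * monomial_above lp.
Proof.
rewrite /edge_monomial (bigID (below e)) /=; congr (_ * _); last first.
  by apply: eq_bigr => e' /negPf not_below; rewrite ffunE not_below.
rewrite rename_edges_monomial.
pose F q := avar (edge_at e q) (lab_at L lm (drop (size (epath e)) q)).
transitivity (\prod_(e' : edge T | prefix (epath e) (epath e')) F (epath e')).
  by apply: eq_bigr => e' e'_below; rewrite ffunE e'_below /F edge_at_epath.
transitivity (\prod_(f : edge (Tminus e)) F (epath e ++ epath f)); last first.
  by apply: eq_bigr => f _; rewrite /F drop_size_cat // lab_at_epath.
rewrite (@big_edges _ 1 *%R T (prefix (epath e)) F).
rewrite (@big_edges _ 1 *%R (Tminus e) xpredT (fun r => F (epath e ++ r))).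
rewrite -big_filter -(big_map (cat (epath e)) xpredT F).
apply: perm_big; apply: uniq_perm; first exact/filter_uniq/uniq_edges.
  by rewrite (map_inj_uniq (@cat_injr _ _)) uniq_edges.
move=> q; rewrite mem_filter mem_edges; apply/idP/mapP.
  case/andP=> /prefixP[r ->]; rewrite is_path_cat is_path_epath /= => path_r.
  by exists r; rewrite ?mem_edges.
case=> r; rewrite mem_edges => path_r ->.
by rewrite prefix_prefix is_path_cat is_path_epath.
Qed.

Lemma monomial_join_plus lm lp : lab_at L lm [::] = lab_at L lp (epath e) ->
  edge_monomial (join L lm lp) =
  rename_edges plus_edge (edge_monomial lp) * monomial_strictly_below lm.
Proof.
move=> lab_e; rewrite /edge_monomial.
rewrite (bigID (fun e' => below e e' && (epath e' != epath e))) /= mulrC.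
congr (_ * _); last by apply: eq_bigr => e' /andP[e'_below _]; rewrite ffunE e'_below.
rewrite rename_edges_monomial.
pose F q := avar (edge_at e q) (lab_at L lp q).
transitivity (\prod_(e' : edge T | ~~ (below e e' && (epath e' != epath e))) F (epath e')).
  apply: eq_bigr => e' e'_above; rewrite ffunE /F edge_at_epath.
  case: ifP e'_above => //= _; rewrite negbK => /eqP ->.
  by rewrite drop_size lab_e.
transitivity (\prod_(f : edge (Tplus e)) F (epath f)); last first.
  by apply: eq_bigr => f _; rewrite /F lab_at_epath.
rewrite (@big_edges _ 1 *%R T (fun q => ~~ (prefix (epath e) q && (q != epath e))) F).
rewrite (@big_edges _ 1 *%R (Tplus e) xpredT F) -big_filter.
apply: perm_big; apply: uniq_perm; [exact/filter_uniq/uniq_edges | exact: uniq_edges|].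
by move=> q; rewrite mem_filter !mem_edges /Tplus is_path_cut ?is_path_epath // andbC.
Qed.

End Monomials.

Theorem lemma4p4 (G : finZmodType) (Lab : finType) (L : G -> Lab)
    (T : tree) (e : edge T) :
  friendly L -> interior_edge e ->
  (forall (d : nat) (lam lam' : 'I_d -> labeling Lab (Tminus e))
          (nu : 'I_d -> labeling Lab (Tplus e)),
     (forall i, lam i \in imL L (Tminus e)) ->
     (forall i, lam' i \in imL L (Tminus e)) ->
     (forall i, lab_at L (lam' i) [::] = lab_at L (lam i) [::]) ->
     (\prod_(i < d) qvar L (lam i) - \prod_(i < d) qvar L (lam' i))
        \in ideal L (Tminus e) ->
     (forall i, nu i \in imL L (Tplus e)) ->
     (forall i, lab_at L (nu i) (epath e) = lab_at L (lam i) [::]) ->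
     [/\ (forall i, join L (lam i) (nu i) \in imL L T),
         (forall i, join L (lam' i) (nu i) \in imL L T) &
         (\prod_(i < d) qvar L (join L (lam i) (nu i))
            - \prod_(i < d) qvar L (join L (lam' i) (nu i))) \in ideal L T])
  /\
  (forall (d : nat) (nu nu' : 'I_d -> labeling Lab (Tplus e))
          (lam : 'I_d -> labeling Lab (Tminus e)),
     (forall i, nu i \in imL L (Tplus e)) ->
     (forall i, nu' i \in imL L (Tplus e)) ->
     (forall i, lab_at L (nu' i) (epath e) = lab_at L (nu i) (epath e)) ->
     (\prod_(i < d) qvar L (nu i) - \prod_(i < d) qvar L (nu' i))
        \in ideal L (Tplus e) ->
     (forall i, lam i \in imL L (Tminus e)) ->
     (forall i, lab_at L (lam i) [::] = lab_at L (nu i) (epath e)) ->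
     [/\ (forall i, join L (lam i) (nu i) \in imL L T),
         (forall i, join L (lam i) (nu' i) \in imL L T) &
         (\prod_(i < d) qvar L (join L (lam i) (nu i))
            - \prod_(i < d) qvar L (join L (lam i) (nu' i))) \in ideal L T]).
Proof.
move=> L_friendly _; split.
  move=> d lam lam' nu lam_imL lam'_imL lam'_e g_ideal nu_imL nu_e.
  have join_lam i : join L (lam i) (nu i) \in imL L T.
    by apply: join_imL; rewrite ?nu_e.
  have join_lam' i : join L (lam' i) (nu i) \in imL L T.
    by apply: join_imL; rewrite ?nu_e ?lam'_e.
  split=> //; apply: (ideal_binomial_lift (f := @minus_edge _ e)
    (C := fun i => monomial_above L (nu i)) lam_imL lam'_imL) => // i;
  exact: monomial_join_minus.
move=> d nu nu' lam nu_imL nu'_imL nu'_e g_ideal lam_imL lam_e.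
have lam_e' i : lab_at L (lam i) [::] = lab_at L (nu' i) (epath e) by rewrite lam_e nu'_e.
have join_nu i : join L (lam i) (nu i) \in imL L T by exact: join_imL.
have join_nu' i : join L (lam i) (nu' i) \in imL L T by exact: join_imL.
split=> //; apply: (ideal_binomial_lift (f := @plus_edge _ e)
  (C := fun i => monomial_strictly_below L (lam i)) nu_imL nu'_imL) => // i;
exact: monomial_join_plus.
Qed.
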